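(* Let $m\in\mathbb{N}$ and $r\ge0$. For all integers $l,n\ge0$, \[ D^{(r)}_{m}(l+n,x)=\sum_{j=0}^{l}\sum_{k=0}^{n}\binom{n}{k}W^{(r)}_{m}(l,j)\,x^{j}\,(mj)^{n-k}\,D^{(r)}_{m}(k,x). \]
   Context: $(x)_k=x(x-1)\cdots(x-k+1)$. For $m\in\mathbb{N}$ and $r\ge0$, the $r$-Whitney numbers of the second kind $W^{(r)}_{m}(n,k)$ are defined by $(mx+r)^{n}=\sum_{k=0}^{n}W^{(r)}_{m}(n,k)m^{k}(x)_k$ ($n\ge0$), and the $r$-Dowling polynomials are $D^{(r)}_{m}(n,x)=\sum_{k=0}^{n}W^{(r)}_{m}(n,k)x^{k}$. (Here $0^{0}=1$.) *)

From HB Require Import structures.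
From mathcomp Require Import all_boot all_order all_algebra.
Set Implicit Arguments. Unset Strict Implicit. Unset Printing Implicit Defensive.
Import Order.TTheory GRing.Theory Num.Theory.
Local Open Scope ring_scope.

Definition falling (R : ringType) (x : R) (k : nat) : R :=
  \prod_(i < k) (x - i%:R).

Definition is_rWhitney2 (R : ringType) (m : nat) (r : R)
    (W : nat -> nat -> R) : Prop :=
  forall (n : nat) (x : R),
    (m%:R * x + r) ^+ n = \sum_(k < n.+1) W n k * m%:R ^+ k * falling x k.

Definition rDowling (R : ringType) (W : nat -> nat -> R) (n : nat) (x : R) : R :=
  \sum_(k < n.+1) W n k * x ^+ k.

(* Expanding (m y + r)^(l+n) = (m y + r)^l (m y + r)^n, first with the Whitney
   expansion of (m y + r)^l, and then, in the term with (y)_j, writing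
   m y + r = m j + (m (y - j) + r) and expanding binomially and again with the
   Whitney numbers, expresses (m y + r)^(l+n) in the basis m^s (y)_s, because
   (y)_j (y - j)_k = (y)_(j+k).  Since the coefficients in the falling factorial
   basis are unique (evaluate at y = 0, 1, 2, ...), this computes W(l+n, s); the
   identity for the Dowling polynomials follows by replacing m^s (y)_s by x^s. *)

From HB Require Import structures.
From mathcomp Require Import all_boot all_order all_algebra.
From mathcomp Require Import ring.
Import Order.TTheory GRing.Theory Num.Theory.

Set Implicit Arguments.
Unset Strict Implicit.
Unset Printing Implicit Defensive.
Local Open Scope ring_scope.

Lemma fallingD (R : nzRingType) (y : R) (j k : nat) :
  falling y (j + k) = falling y j * falling (y - j%:R) k.
Proof.
rewrite /falling big_split_ord /=; congr (_ * _).
by apply: eq_bigr => i _; rewrite natrD opprD addrA.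
Qed.

Lemma falling_nat_eq0 (R : nzRingType) (i k : nat) :
  (i < k)%N -> falling (i%:R : R) k = 0.
Proof.
move=> lt_ik; have [d ->] : exists d, k = (i + d.+1)%N.
  by exists (k - i).-1; rewrite prednK ?subn_gt0 // subnKC // ltnW.
by rewrite fallingD subrr /falling big_ord_recl /= subr0 mul0r mulr0.
Qed.

Lemma falling_nat_neq0 (R : numDomainType) (i : nat) : falling (i%:R : R) i != 0.
Proof.
by apply/prodf_neq0 => t _; rewrite subr_eq0 eqr_nat neq_ltn ltn_ord orbT.
Qed.

Lemma falling_coef_eq0 (R : numDomainType) (N : nat) (d : nat -> R) :
  (forall y : R, \sum_(k < N) d k * falling y k = 0) ->
  forall k, (k < N)%N -> d k = 0.
Proof.
move=> dF0; elim/ltn_ind => k IHk lt_kN.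
move: (dF0 k%:R); rewrite (bigD1 (Ordinal lt_kN)) //= big1 ?addr0.
  by move/eqP; rewrite mulf_eq0 (negPf (falling_nat_neq0 _ _)) orbF => /eqP.
move=> t; rewrite -val_eqE /=; case: ltngtP => // [lt_tk | lt_kt] _.
- by rewrite IHk ?mul0r.
- by rewrite falling_nat_eq0 ?mulr0.
Qed.

Lemma sum_ord_collect (R : pzSemiRingType) (N e : nat) (a : R) (G : nat -> R) :
  (e < N)%N -> \sum_(s < N) (a *+ (e == s)) * G s = a * G e.
Proof.
move=> lt_eN; transitivity (if (e < N)%N then a * G e else 0); last by rewrite lt_eN.
rewrite -(big_ord1_eq +%R (fun s => a * G s)) [RHS]big_mkcond /=; apply: eq_bigr => s _.
by rewrite eq_sym; case: eqP; rewrite ?mulr1n ?mulr0n ?mul0r.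
Qed.

Section WhitneyConvolution.

Variables (R : comNzRingType) (m : nat) (r : R) (W : nat -> nat -> R).
Hypothesis W_expansion : is_rWhitney2 m r W.
Variables l n : nat.

Definition whitney_conv_term (j i k : nat) : R :=
  W l j * 'C(n, i)%:R * (m * j)%:R ^+ (n - i) * W i k.

Definition whitney_conv (s : nat) : R :=
  \sum_(j < l.+1) \sum_(i < n.+1) \sum_(k < i.+1)
    whitney_conv_term j i k *+ (j + k == s)%N.

Lemma whitney_conv_sum (G : nat -> R) :
  \sum_(s < (l + n).+1) whitney_conv s * G s =
  \sum_(j < l.+1) \sum_(i < n.+1) \sum_(k < i.+1)
    whitney_conv_term j i k * G (j + k)%N.
Proof.
rewrite /whitney_conv.
under eq_bigr do rewrite mulr_suml; rewrite exchange_big; apply: eq_bigr => j _.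
under eq_bigr do rewrite mulr_suml; rewrite exchange_big; apply: eq_bigr => i _.
under eq_bigr do rewrite mulr_suml; rewrite exchange_big; apply: eq_bigr => k _.
rewrite sum_ord_collect // ltnS; apply: leq_add; rewrite -ltnS //.
exact: leq_trans (ltn_ord k) (ltn_ord i).
Qed.

Lemma whitney_shift_expansion (y : R) :
  (m%:R * y + r) ^+ (l + n) =
  \sum_(j < l.+1) \sum_(i < n.+1) \sum_(k < i.+1)
    whitney_conv_term j i k * (m%:R ^+ (j + k) * falling y (j + k)).
Proof.
rewrite exprD W_expansion mulr_suml; apply: eq_bigr => j _ /=.
have -> : m%:R * y + r = (m * j)%:R + (m%:R * (y - j%:R) + r).
  by rewrite natrM; ring.
rewrite exprDn mulr_sumr; apply: eq_bigr => i _ /=.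
rewrite W_expansion mulr_sumr -sumrMnl mulr_sumr; apply: eq_bigr => k _.
by rewrite fallingD exprD /whitney_conv_term; ring.
Qed.

End WhitneyConvolution.

Lemma rWhitney2_addn (R : numDomainType) (m : nat) (r : R)
    (W : nat -> nat -> R) (l n s : nat) :
  (0 < m)%N -> is_rWhitney2 m r W -> (s <= l + n)%N ->
  W (l + n)%N s = whitney_conv m W l n s.
Proof.
move=> m_gt0 W_expansion le_s_ln; apply/eqP; rewrite -subr_eq0; apply/eqP.
apply: (@mulIf _ (m%:R ^+ s)); first by rewrite expf_neq0 // pnatr_eq0 -lt0n.
rewrite mul0r; pose d k := (W (l + n)%N k - whitney_conv m W l n k) * m%:R ^+ k.
apply: (@falling_coef_eq0 _ (l + n).+1 d) => // y.
under eq_bigr do rewrite /d !mulrBl.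
rewrite sumrB -W_expansion; under [X in _ - X]eq_bigr do rewrite -mulrA.
by rewrite (@whitney_conv_sum _ m W l n (fun k => m%:R ^+ k * falling y k))
  (whitney_shift_expansion W_expansion) subrr.
Qed.

Theorem mainTheorem10 (R : realFieldType) (m : nat) (r : R)
    (W : nat -> nat -> R) :
  (0 < m)%N -> 0 <= r -> is_rWhitney2 m r W ->
  forall (l n : nat) (x : R),
    rDowling W (l + n) x =
    \sum_(j < l.+1) \sum_(k < n.+1)
       'C(n, k)%:R * W l j * x ^+ j * ((m * j)%:R) ^+ (n - k) * rDowling W k x.
Proof.
move=> m_gt0 _ W_expansion l n x; rewrite /rDowling.
under eq_bigr => s _ do rewrite (rWhitney2_addn m_gt0 W_expansion (ltn_ord s)).
rewrite (@whitney_conv_sum _ m W l n (fun k => x ^+ k)).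
apply: eq_bigr => j _; apply: eq_bigr => i _.
rewrite mulr_sumr; apply: eq_bigr => k _.
by rewrite exprD /whitney_conv_term; ring.
Qed.
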